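(* Let $V$ be an infinite-dimensional left vector space over a field $K$. Then there exists an automorphism of the Grassmann graph on $\mathcal G$ (a bijection $\phi:\mathcal G\to\mathcal G$ with $X\sim Y\iff X^\phi\sim Y^\phi$) which is not an automorphism of the distant graph on $\mathcal G$; more precisely, there exist $P,Q\in\mathcal G$ with $P\oplus Q=V$ but $P^\phi\oplus Q^\phi\neq V$.
   Context: Fields are not necessarily commutative (division rings). $\mathcal G$ denotes the set of all subspaces $X\le V$ such that $X$ is isomorphic to $V/X$. Two elements $X,Y\in\mathcal G$ are distant if $X\oplus Y=V$, and adjacent ($X\sim Y$) if $\dim((X+Y)/X)=\dim((X+Y)/Y)=1$. The Grassmann graph (resp. distant graph) on $\mathcal G$ has vertex set $\mathcal G$ and edges the pairs of adjacent (resp. distant) elements. *)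

From HB Require Import structures.
From mathcomp Require Import all_boot all_order all_algebra.
Set Implicit Arguments. Unset Strict Implicit. Unset Printing Implicit Defensive.
Import GRing.Theory.
Local Open Scope ring_scope.

Section Grass.
Variables (K : unitRingType) (V : lmodType K).

Definition subspace (X : V -> Prop) : Prop :=
  X 0 /\ forall (a : K) (u v : V), X u -> X v -> X (a *: u + v).

Definition infinite_dim : Prop :=
  ~ exists s : seq V, forall v : V,
      exists c : nat -> K, v = \sum_(i < size s) c i *: s`_i.

Definition addsp (X Y : V -> Prop) : V -> Prop :=
  fun v => exists x y, X x /\ Y y /\ v = x + y.

Definition linmap (f : V -> V) : Prop :=
  forall (a : K) (u v : V), f (a *: u + v) = a *: f u + f v.

(* X is isomorphic to V/X: there is a linear map of V onto X whose kernel
   is exactly X (first isomorphism theorem: V/X ~ image = X). *)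
Definition iso_quot (X : V -> Prop) : Prop :=
  exists f : V -> V, linmap f /\
    (forall v, X (f v)) /\
    (forall x, X x -> exists v, f v = x) /\
    (forall v, f v = 0 <-> X v).

Definition inG (X : V -> Prop) : Prop := subspace X /\ iso_quot X.

Definition Gr := {X : V -> Prop | inG X}.

(* dim(Z/X) = 1 for subspaces X <= Z : Z/X is spanned by the class of a
   single vector w of Z not in X. *)
Definition quot_dim1 (Z X : V -> Prop) : Prop :=
  (forall x, X x -> Z x) /\
  exists w, Z w /\ ~ X w /\
    forall z, Z z -> exists (x : V) (a : K), X x /\ z = x + a *: w.

Definition adjacent (X Y : Gr) : Prop :=
  quot_dim1 (addsp (proj1_sig X) (proj1_sig Y)) (proj1_sig X) /\
  quot_dim1 (addsp (proj1_sig X) (proj1_sig Y)) (proj1_sig Y).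

Definition distant (X Y : Gr) : Prop :=
  (forall v, proj1_sig X v -> proj1_sig Y v -> v = 0) /\
  (forall v, addsp (proj1_sig X) (proj1_sig Y) v).

End Grass.

From HB Require Import structures.
From mathcomp Require Import all_boot all_order all_algebra.
From mathcomp Require Import classical_sets.
From Stdlib Require Import Relations ClassicalEpsilon FunctionalExtensionality.
From Stdlib Require Import PropExtensionality ProofIrrelevance Classical.
Import GRing.Theory.
Local Open Scope ring_scope.
Set Implicit Arguments. Unset Strict Implicit. Unset Printing Implicit Defensive.

(* Core (SwapFrame): write V = P (+) Q with a linear involution T exchanging
   P and Q, and a linear form mu with mu p0 = 1, mu (T p0) = -1 (p0 in P).
   The reflection g exchanging p0 and T p0 moves Q to an adjacent subspace;
   applying g only on the connected component of Q (PatchOnComponent) gives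
   a Grassmann automorphism.  That component stays within Q + (finite
   dimensional) (NearQ) while P does not, so P is fixed, and Q goes to g(Q),
   which meets P in p0.
   Existence of such data: take an independent sequence e and, by Zorn, a
   maximal isomorphism A between subspaces D, R with D (+) R (+) <e> direct;
   after adjoining one vector to e this sum is V (MaximalFrame), and
   coordinates in it give P, T and mu (FromFrame). *)

Section LinearMaps.
Variables (K : unitRingType) (V : lmodType K).
Implicit Types (f : V -> V) (u v : V) (a : K).

Lemma lin0 f : linmap f -> f 0 = 0.
Proof.
move=> lf; have h := lf 1 0 0; rewrite !scale1r addr0 in h.
by apply: (addrI (f 0)); rewrite addr0 -h.
Qed.

Lemma linD f : linmap f -> forall u v, f (u + v) = f u + f v.
Proof. by move=> lf u v; rewrite -[u]scale1r lf !scale1r. Qed.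

Lemma linZ f : linmap f -> forall a u, f (a *: u) = a *: f u.
Proof. by move=> lf a u; rewrite -[a *: u]addr0 lf lin0 // addr0. Qed.

Lemma linB f : linmap f -> forall u v, f (u - v) = f u - f v.
Proof. by move=> lf u v; rewrite linD // -scaleN1r linZ // scaleN1r. Qed.

Lemma lin_sum f n (c : nat -> K) (s : seq V) : linmap f ->
  f (\sum_(i < n) c i *: s`_i) = \sum_(i < n) c i *: f s`_i.
Proof.
move=> lf; elim: n => [|n IH]; first by rewrite !big_ord0 lin0.
by rewrite !big_ord_recr /= linD // linZ // IH.
Qed.

End LinearMaps.

Lemma scale_inv (K : unitRingType) (V : lmodType K) (a : K) (v w : V) :
  a \is a GRing.unit -> a *: v = w -> v = a^-1 *: w.
Proof. by move=> ua <-; rewrite scalerA mulVr ?scale1r. Qed.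

Section Spans.
Variables (K : unitRingType) (V : lmodType K).

Definition in_span (s : seq V) (x : V) :=
  exists c : nat -> K, x = \sum_(i < size s) c i *: s`_i.

Lemma in_span_cons s w x k : in_span s x -> in_span (w :: s) (k *: w + x).
Proof.
move=> [c ->]; exists (fun i => if i is i'.+1 then c i' else k).
by rewrite /= big_ord_recl.
Qed.

Lemma in_span_cat s1 s2 x1 x2 :
  in_span s1 x1 -> in_span s2 x2 -> in_span (s1 ++ s2) (x1 + x2).
Proof.
move=> [c1 ->] [c2 ->].
exists (fun i => if (i < size s1)%N then c1 i else c2 (i - size s1)%N).
rewrite size_cat big_split_ord; congr (_ + _).
  by apply: eq_bigr => i _; rewrite /= nth_cat ltn_ord.
by apply: eq_bigr => i _; rewrite /= nth_cat ltnNge leq_addr /= addKn.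
Qed.

Lemma in_span_map (f : V -> V) s x :
  linmap f -> in_span s x -> in_span (map f s) (f x).
Proof.
move=> lf [c ->]; exists c; rewrite lin_sum // size_map.
by apply: eq_bigr => i _; rewrite (nth_map 0) // ltn_ord.
Qed.

End Spans.

Section Grassmann.
Variables (K : unitRingType) (V : lmodType K).

Lemma Gr_eq (X Y : Gr V) : (forall v, sval X v <-> sval Y v) -> X = Y.
Proof.
case: X => X hX; case: Y => Y hY /= h.
have eXY : X = Y.
  by apply: functional_extensionality => v; apply: propositional_extensionality.
by subst; rewrite (proof_irrelevance _ hX hY).
Qed.

Lemma Gr0 (X : Gr V) : sval X 0.
Proof. by case: X => X [[]]. Qed.

Lemma quot_dim1_congr (Z Z' X X' : V -> Prop) :
  (forall v, Z v <-> Z' v) -> (forall v, X v <-> X' v) ->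
  quot_dim1 Z X -> quot_dim1 Z' X'.
Proof.
move=> hZ hX [sub [w [Zw [nXw hw]]]]; split; first by move=> x /hX /sub /hZ.
exists w; split; first exact/hZ.
split; first by move=> /hX.
by move=> z /hZ /hw [x [a [Xx ->]]]; exists x, a; split=> //; apply/hX.
Qed.

End Grassmann.

(* A linear involution g of V acts on G by X |-> g^-1(X) = g(X), and this
   action preserves adjacency. *)
Section InvolutionAction.
Variables (K : unitRingType) (V : lmodType K) (g : V -> V).
Hypotheses (lg : linmap g) (gK : involutive g).

Lemma quot_dim1_inv (Z X : V -> Prop) :
  quot_dim1 Z X -> quot_dim1 (fun v => Z (g v)) (fun v => X (g v)).
Proof.
move=> [sub [w [Zw [nXw hw]]]]; split; first by move=> x /sub.
exists (g w); rewrite gK; do 2!split=> //.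
move=> z /hw [x [a [Xx ez]]]; exists (g x), a; rewrite gK; split=> //.
by rewrite -[z]gK ez linD // linZ.
Qed.

Lemma addsp_inv (X Y : V -> Prop) v :
  addsp (fun v => X (g v)) (fun v => Y (g v)) v <-> addsp X Y (g v).
Proof.
split; first by move=> [x [y [Xx [Yy ->]]]]; exists (g x), (g y); rewrite linD.
move=> [x [y [Xx [Yy e]]]]; exists (g x), (g y); rewrite !gK; do 2!split=> //.
by rewrite -linD // -e gK.
Qed.

Lemma inG_inv (X : V -> Prop) : inG X -> inG (fun v => X (g v)).
Proof.
move=> [[X0 Xc] [F [lF [FX [Fon Fker]]]]]; split.
  split; first by rewrite lin0.
  by move=> a u v Xu Xv; rewrite lg; apply: Xc.
exists (fun v => g (F (g v))); split; first by move=> a u v; rewrite lg lF lg.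
split; first by move=> v; rewrite gK.
split; first by move=> x /Fon [v Fv]; exists (g v); rewrite gK Fv gK.
move=> v; split; last by move=> /Fker ->; rewrite lin0.
by move=> h; apply/Fker; rewrite -[F _]gK h lin0.
Qed.

Definition actG (X : Gr V) : Gr V := exist _ _ (inG_inv (proj2_sig X)).

Lemma actGK : involutive actG.
Proof. by move=> X; apply: Gr_eq => v /=; rewrite gK. Qed.

Lemma actG_adjacent X Y : adjacent X Y -> adjacent (actG X) (actG Y).
Proof.
move=> [h1 h2]; split.
  by apply: quot_dim1_congr (quot_dim1_inv h1) => v //; rewrite addsp_inv.
by apply: quot_dim1_congr (quot_dim1_inv h2) => v //; rewrite addsp_inv.
Qed.

(* X ~ g(X) as soon as X has codimension 1 in X + g(X): the other half of
   the adjacency condition is the image of this one under g. *)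
Lemma adjacent_actG X :
  quot_dim1 (addsp (sval X) (sval (actG X))) (sval X) -> adjacent X (actG X).
Proof.
move=> h; split=> //; apply: quot_dim1_congr (quot_dim1_inv h) => v //=.
have swap u : addsp (sval X) (fun w => sval X (g w)) (g u) ->
                addsp (sval X) (fun w => sval X (g w)) u.
  move=> [x [y [Xx [Xgy e]]]]; exists (g y), (g x); rewrite gK.
  by do 2!split=> //; rewrite -linD // addrC -e gK.
by split=> [/swap //|hv]; apply: swap; rewrite gK.
Qed.

End InvolutionAction.

(* An involutive automorphism of a relation may be applied on a single
   connected component only, provided it maps that component to itself;
   the patched map is again an involutive automorphism. *)
Section PatchOnComponent.
Variables (T : Type) (R : T -> T -> Prop) (g : T -> T) (c : T).
Hypotheses (gK : involutive g) (gR : forall x y, R x y -> R (g x) (g y))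
  (Rcg : R c (g c)).

Definition component (x : T) : Prop := clos_refl_sym_trans T R x c.

Lemma component_rel x y : R x y -> component x <-> component y.
Proof.
move=> Rxy; split=> h; last exact: rst_trans (rst_step _ _ _ _ Rxy) h.
exact: rst_trans (rst_sym _ _ _ _ (rst_step _ _ _ _ Rxy)) h.
Qed.

(* g maps the component of c into itself because c ~ g c. *)
Lemma component_g x : component x -> component (g x).
Proof.
move=> h; apply: rst_trans (rst_sym _ _ _ _ (rst_step _ _ _ _ Rcg)).
elim: h => {x} [x y /gR|x|x y _|x y z _ h1 _ h2].
- exact: rst_step.
- exact: rst_refl.
- exact: rst_sym.
- exact: rst_trans h2.
Qed.

Definition patch (x : T) : T :=
  if excluded_middle_informative (component x) then g x else x.

Lemma patch_in x : component x -> patch x = g x.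
Proof. by rewrite /patch; case: excluded_middle_informative. Qed.

Lemma patch_out x : ~ component x -> patch x = x.
Proof. by rewrite /patch; case: excluded_middle_informative. Qed.

Lemma patchK : involutive patch.
Proof.
move=> x; have [Cx|nCx] := classic (component x); last by rewrite !patch_out.
by rewrite !patch_in ?gK //; exact: component_g.
Qed.

Lemma patch_rel x y : R x y -> R (patch x) (patch y).
Proof.
move=> Rxy; have [Cx|nCx] := classic (component x).
  by rewrite !patch_in //; [exact: gR | exact/(component_rel Rxy)].
by rewrite !patch_out // => /(component_rel Rxy).
Qed.

End PatchOnComponent.

Lemma involutive_automorphism (T : Type) (R : T -> T -> Prop) (f : T -> T) :
  involutive f -> (forall x y, R x y -> R (f x) (f y)) ->
  bijective f /\ forall x y, R x y <-> R (f x) (f y).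
Proof.
move=> fK fR; split; first exact: inv_bij.
by move=> x y; split=> [/fR //|/fR]; rewrite !fK.
Qed.

(* The subspaces X contained in Q + <s> for a finite family s.  Adjacency
   changes X by at most one dimension, so this property is constant on
   connected components of the Grassmann graph. *)
Section NearQ.
Variables (K : unitRingType) (V : lmodType K) (Q : V -> Prop).

Definition near (X : V -> Prop) : Prop :=
  exists s, forall x, X x -> exists q y, Q q /\ in_span s y /\ x = q + y.

Lemma near_quot_dim1 (Z X Y : V -> Prop) :
  quot_dim1 Z X -> (forall y, Y y -> Z y) -> near X -> near Y.
Proof.
move=> [_ [w [_ [_ hw]]]] YZ [s hs]; exists (w :: s) => y /YZ /hw [x [k [Xx ->]]].
have [q [z [Qq [sz ->]]]] := hs x Xx.
exists q, (k *: w + z); do 2?split=> //; first exact: in_span_cons.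
by rewrite -addrA [z + _]addrC.
Qed.

Lemma near_adjacent (X Y : Gr V) : adjacent X Y -> near (sval X) <-> near (sval Y).
Proof.
move=> [h1 h2]; split; [apply: (near_quot_dim1 h1) | apply: (near_quot_dim1 h2)].
  by move=> y Yy; exists 0, y; rewrite add0r; do 2?split=> //; exact: Gr0.
by move=> x Xx; exists x, 0; rewrite addr0; do 2?split=> //; exact: Gr0.
Qed.

Lemma near_component (X Y : Gr V) :
  clos_refl_sym_trans _ (@adjacent _ V) X Y -> near (sval X) <-> near (sval Y).
Proof.
elim=> {X Y} [X Y /near_adjacent //|X //|X Y _|X Y Z _ h1 _ h2]; tauto.
Qed.

End NearQ.

(* Suppose V = P (+) Q where P is the image and Q
   the kernel of a projection pi, T is a linear involution exchanging P and
   Q, and mu is a linear form with mu p0 = 1, mu (T p0) = -1 for some p0 in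
   P.  Then P, Q lie in G and are distant. *)
Section SwapFrame.
Variables (K : unitRingType) (V : lmodType K).
Variables (pi T : V -> V) (mu : V -> K) (p0 : V).
Hypotheses (lpi : linmap pi) (lT : linmap T)
  (lmu : forall a u v, mu (a *: u + v) = a * mu u + mu v)
  (piK : forall v, pi (pi v) = pi v) (TK : involutive T)
  (pi_T : forall v, pi (T v) = T v - T (pi v))
  (pi_p0 : pi p0 = p0) (mu_p0 : mu p0 = 1) (mu_Tp0 : mu (T p0) = -1).

Lemma mu0 : mu 0 = 0.
Proof.
have h := lmu 1 0 0; rewrite !scale1r addr0 mul1r in h.
by apply: (addrI (mu 0)); rewrite addr0 -h.
Qed.

Lemma muD u v : mu (u + v) = mu u + mu v.
Proof. by have := lmu 1 u v; rewrite scale1r mul1r. Qed.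

Lemma muZ a u : mu (a *: u) = a * mu u.
Proof. by rewrite -[a *: u]addr0 lmu mu0 addr0. Qed.

Definition Pset (v : V) : Prop := pi v = v.
Definition Qset (v : V) : Prop := pi v = 0.

Definition qproj (v : V) : V := v - pi v.

Lemma qproj_lin : linmap qproj.
Proof. by move=> a u v; rewrite /qproj lpi scalerBr opprD addrACA. Qed.

Lemma Q_qproj v : Qset (qproj v).
Proof. by rewrite /Qset /qproj linB // piK subrr. Qed.

Lemma Q_T v : Pset v -> Qset (T v).
Proof. by rewrite /Qset pi_T => ->; rewrite subrr. Qed.

Lemma P_T v : Qset v -> Pset (T v).
Proof. by rewrite /Pset pi_T => ->; rewrite lin0 // subr0. Qed.

(* V/P ~ Q ~ P via v |-> T (qproj v). *)
Lemma P_inG : inG Pset.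
Proof.
split.
  split; first by rewrite /Pset lin0.
  by move=> a u v; rewrite /Pset lpi => -> ->.
exists (fun v => T (qproj v)); split; first by move=> a u v; rewrite qproj_lin lT.
split; first by move=> v; apply/P_T/Q_qproj.
split; first by move=> x Px; exists (T x); rewrite /qproj pi_T Px subKr TK.
move=> v; split; last by rewrite /Pset /qproj => ->; rewrite subrr lin0.
by move=> h; apply/esym/subr0_eq; rewrite -/(qproj v) -[qproj v]TK h lin0.
Qed.

(* V/Q ~ P ~ Q via v |-> T (pi v). *)
Lemma Q_inG : inG Qset.
Proof.
split.
  split; first by rewrite /Qset lin0.
  by move=> a u v; rewrite /Qset lpi => -> ->; rewrite scaler0 addr0.
exists (fun v => T (pi v)); split; first by move=> a u v; rewrite lpi lT.
split; first by move=> v; apply/Q_T/piK.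
split; first by move=> x Qx; exists (T x); rewrite pi_T Qx lin0 // subr0 TK.
move=> v; split; last by rewrite /Qset => ->; rewrite lin0.
by move=> h; rewrite /Qset -[pi v]TK h lin0.
Qed.

Definition PG : Gr V := exist _ Pset P_inG.
Definition QG : Gr V := exist _ Qset Q_inG.

Lemma distant_PQ : distant PG QG.
Proof.
split; first by rewrite /= /Pset /Qset => v ->.
move=> v; exists (pi v), (qproj v); do 2?split; [exact: piK | exact: Q_qproj |].
by rewrite /qproj addrC subrK.
Qed.

Lemma Q_Tp0 : Qset (T p0).
Proof. exact: Q_T. Qed.

Lemma notQ_p0 : ~ Qset p0.
Proof.
rewrite /Qset pi_p0 => p00; move: mu_p0; rewrite p00 mu0 => /eqP.
by rewrite eq_sym oner_eq0.
Qed.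

Definition refl (v : V) : V := v + mu v *: (T p0 - p0).

Lemma refl_lin : linmap refl.
Proof.
by move=> a u v; rewrite /refl lmu scalerDl -scalerA addrACA -scalerDr.
Qed.

Lemma mu_refl v : mu (refl v) = - mu v.
Proof.
rewrite /refl muD muZ muD -scaleN1r muZ mu_p0 mu_Tp0 mulr1.
by rewrite mulrDr mulrN1 addrA subrr sub0r.
Qed.

Lemma reflK : involutive refl.
Proof. by move=> v; rewrite {1}/refl mu_refl scaleNr /refl addrK. Qed.

Lemma refl_p0 : refl p0 = T p0.
Proof. by rewrite /refl mu_p0 scale1r addrC subrK. Qed.

Definition reflG : Gr V -> Gr V := actG refl_lin reflK.

Lemma reflGK : involutive reflG.
Proof. exact: actGK. Qed.

Lemma reflG_adjacent X Y : adjacent X Y -> adjacent (reflG X) (reflG Y).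
Proof. exact: actG_adjacent. Qed.

(* Q has codimension 1 in Q + g(Q), spanned by p0 modulo Q. *)
Lemma Q_adjacent_reflQ : adjacent QG (reflG QG).
Proof.
apply: adjacent_actG; split.
  move=> x Qx; exists x, 0; split; first exact: Qx.
  split; last by rewrite addr0.
  by rewrite /= /Qset (lin0 refl_lin) (lin0 lpi).
exists p0; split.
  exists 0, p0; split; first by rewrite /= /Qset (lin0 lpi).
  by split; [rewrite /= refl_p0; exact: Q_Tp0 | rewrite add0r].
split; first by move/notQ_p0.
move=> z [q [v [Qq [Qgv ->]]]]; rewrite /= /Qset in Qq Qgv.
exists (q + refl v + mu (refl v) *: T p0), (- mu (refl v)); split.
  rewrite /= /Qset (linD lpi (q + refl v)) (linD lpi q) (linZ lpi) Qq Qgv.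
  by rewrite (Q_Tp0 : pi (T p0) = 0) scaler0 !addr0.
have ev : v = refl v + mu (refl v) *: (T p0 - p0) by rewrite -{1}(reflK v).
by rewrite {1}ev scalerBr scaleNr !addrA.
Qed.

Hypothesis hinf : infinite_dim V.

(* P is not within finite distance of Q: otherwise a finite family would span
   V = P + Q, since Q = T(P). *)
Lemma not_near_P : ~ near Qset Pset.
Proof.
move=> [s hs]; apply: hinf.
exists (map (fun x => T (pi x)) s ++ s) => v.
have [q [z [Qq [sz e]]]] := hs (pi v) (piK v).
pose y := q + qproj v.
have Qy : Qset y by rewrite /Qset /y linD // Qq Q_qproj addr0.
have [q' [z' [Qq' [sz' e']]]] := hs _ (P_T Qy).
have ey : y = T (pi z') by rewrite -[y]TK -(P_T Qy) e' linD // Qq' add0r.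
have -> : v = y + z by rewrite /y /qproj addrAC -addrA e addrA subrKC.
apply: in_span_cat => //; rewrite ey.
by apply: (in_span_map (f := fun x => T (pi x))) => // a u w; rewrite lpi lT.
Qed.

Theorem swap_frame_counterexample : exists phi : Gr V -> Gr V,
    bijective phi /\
    (forall X Y : Gr V, adjacent X Y <-> adjacent (phi X) (phi Y)) /\
    exists P Q : Gr V, distant P Q /\ ~ distant (phi P) (phi Q).
Proof.
pose phi := patch (@adjacent _ V) reflG QG.
have phiK : involutive phi := patchK reflGK reflG_adjacent Q_adjacent_reflQ.
have phi_adj X Y : adjacent X Y -> adjacent (phi X) (phi Y).
  by move=> XY; apply: (patch_rel QG reflG_adjacent XY).
exists phi; split; first exact: (involutive_automorphism phiK phi_adj).1.
split; first exact: (involutive_automorphism phiK phi_adj).2.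
exists PG, QG; split; first exact: distant_PQ.
have nearQ : near Qset (sval QG) by exists [::] => x Qx; exists x, 0;
  rewrite addr0; do 2?split=> //; exists (fun _ => 0); rewrite big_ord0.
have -> : phi PG = PG.
  by apply: patch_out => /near_component nP; apply/not_near_P/nP.
rewrite /phi patch_in; last exact: rst_refl.
move=> [disj _]; apply: notQ_p0; have -> : p0 = 0.
  by apply: disj; rewrite //= refl_p0; exact: Q_Tp0.
by rewrite /Qset lin0.
Qed.

End SwapFrame.

Lemma scale_add3 (R : pzRingType) (M : lmodType R) a (x1 x2 x3 y1 y2 y3 : M) :
  a *: (x1 + x2 + x3) + (y1 + y2 + y3) =
  (a *: x1 + y1) + (a *: x2 + y2) + (a *: x3 + y3).
Proof. by rewrite !scalerDr addrACA [X in X + _ = _]addrACA. Qed.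

Lemma sub_add3 (M : zmodType) (x1 x2 x3 y1 y2 y3 : M) :
  x1 + x2 + x3 = y1 + y2 + y3 -> (x1 - y1) + (x2 - y2) = y3 - x3.
Proof.
move=> h.
have e3 : x1 + x2 + x3 - (y1 + y2 + y3) = (x1 - y1) + (x2 - y2) + (x3 - y3).
  by rewrite !opprD addrACA [X in X + _ = _]addrACA.
have /eqP : (x1 - y1) + (x2 - y2) + (x3 - y3) = 0 by rewrite -e3 h subrr.
by rewrite addr_eq0 => /eqP ->; rewrite opprB.
Qed.

Section Coordinates.
Variables (K : unitRingType) (V : lmodType K) (e : nat -> V).

Definition esum (N : nat) (c : nat -> K) : V := \sum_(i < N) c i *: e i.
Definition in_espan (v : V) : Prop := exists N c, v = esum N c.
Definition independent : Prop :=
  forall N c, esum N c = 0 -> forall i, (i < N)%N -> c i = 0.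
Definition supported (N : nat) (c : nat -> K) : Prop :=
  forall i, (N <= i)%N -> c i = 0.
Definition finsupp (c : nat -> K) : Prop := exists N, supported N c.
Definition restrict (N : nat) (c : nat -> K) (i : nat) : K :=
  if (i < N)%N then c i else 0.

Lemma supported_restrict N c : supported N (restrict N c).
Proof. by move=> i; rewrite /restrict ltnNge => ->. Qed.

Lemma esum_restrict M N c : (N <= M)%N -> esum M (restrict N c) = esum N c.
Proof.
elim: M => [|M IH] NM.
  by move: NM; rewrite leqn0 => /eqP ->; rewrite /esum !big_ord0.
case: (ltngtP N M.+1) => [lt|gt|->]; first last.
- by apply: eq_bigr => i _; rewrite /restrict ltn_ord.
- by move: NM; rewrite leqNgt gt.
rewrite /esum big_ord_recr /= /restrict ltnNge -ltnS lt /= scale0r addr0.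
exact: IH.
Qed.

Lemma restrict_id N c : supported N c -> restrict N c = c.
Proof.
move=> s; apply: functional_extensionality => i; rewrite /restrict.
by case: ltnP => // /s ->.
Qed.

Lemma esum_widen M N c : supported N c -> (N <= M)%N -> esum M c = esum N c.
Proof. by move=> s NM; rewrite -{1}(restrict_id s) esum_restrict. Qed.

Lemma esum_lin N a c1 c2 :
  esum N (fun i => a * c1 i + c2 i) = a *: esum N c1 + esum N c2.
Proof.
rewrite /esum scaler_sumr -big_split /=; apply: eq_bigr => i _.
by rewrite scalerDl scalerA.
Qed.

Lemma supported_lin N a c1 c2 :
  supported N c1 -> supported N c2 -> supported N (fun i => a * c1 i + c2 i).
Proof. by move=> s1 s2 i h; rewrite s1 // s2 // mulr0 addr0. Qed.

Lemma supported_maxl N M c : supported N c -> supported (maxn N M) c.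
Proof. by move=> s i h; apply: s; apply: leq_trans h; exact: leq_maxl. Qed.

Lemma supported_maxr N M c : supported M c -> supported (maxn N M) c.
Proof. by move=> s i h; apply: s; apply: leq_trans h; exact: leq_maxr. Qed.

Lemma in_espan_lin a u v : in_espan u -> in_espan v -> in_espan (a *: u + v).
Proof.
move=> [N1 [c1 ->]] [N2 [c2 ->]].
exists (maxn N1 N2), (fun i => a * restrict N1 c1 i + restrict N2 c2 i).
by rewrite esum_lin !esum_restrict ?leq_maxl ?leq_maxr.
Qed.

Lemma in_espan0 : in_espan 0.
Proof. by exists 0%N, (fun _ => 0); rewrite /esum big_ord0. Qed.

Definition bound (c : nat -> K) : nat :=
  epsilon (inhabits 0%N) (fun N => supported N c).
Definition fsum (c : nat -> K) : V := esum (bound c) c.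

Lemma fsum_eq N c : supported N c -> fsum c = esum N c.
Proof.
move=> s; have sb : supported (bound c) c.
  exact: (epsilon_spec (inhabits 0%N) (fun N => supported N c) (ex_intro _ N s)).
rewrite /fsum -(esum_widen sb (leq_maxr N (bound c))).
exact: esum_widen s (leq_maxl N (bound c)).
Qed.

Lemma fsum_lin N a c1 c2 : supported N c1 -> supported N c2 ->
  fsum (fun i => a * c1 i + c2 i) = a *: fsum c1 + fsum c2.
Proof.
move=> s1 s2; rewrite (fsum_eq (supported_lin a s1 s2)) (fsum_eq s1) (fsum_eq s2).
exact: esum_lin.
Qed.

End Coordinates.

(* A relation A on V is good (relative to e) when it is the graph of a linear
   isomorphism between two subspaces dom A and ran A such that the sum
   dom A + ran A + <e> is direct.  A frame is a good relation for an
   independent e such that this sum is all of V. *)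
Section GoodRelations.
Variables (K : unitRingType) (V : lmodType K) (e : nat -> V).

Definition dom (A : V * V -> Prop) (x : V) : Prop := exists y, A (x, y).
Definition ran (A : V * V -> Prop) (y : V) : Prop := exists x, A (x, y).

Record good (A : V * V -> Prop) : Prop := Good {
  good_lin : forall a x y x' y', A (x, y) -> A (x', y') ->
    A (a *: x + x', a *: y + y');
  good_fun : forall y, A (0, y) -> y = 0;
  good_inj : forall x, A (x, 0) -> x = 0;
  good_direct : forall x y, dom A x -> ran A y -> in_espan e (x + y) ->
    x = 0 /\ y = 0 }.

Lemma good_zero A t : good A -> A t -> A (0, 0).
Proof.
move=> gA; case: t => x y Axy.
by have := good_lin gA (-1) Axy Axy; rewrite !scaleN1r !addNr.
Qed.

Definition in_frame (A : V * V -> Prop) (v : V) : Prop :=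
  exists x y w, dom A x /\ ran A y /\ in_espan e w /\ v = x + y + w.

End GoodRelations.

(* A frame yields the data of the swap construction: writing
   v = d + r + sum_i c_i e_i with d in dom A and r in ran A, the projection
   keeps d and the even coordinates, the involution T exchanges d and r
   through A and swaps e_(2k) with e_(2k+1), and mu = c_0 - c_1, p0 = e_0. *)
Section FromFrame.
Variables (K : unitRingType) (V : lmodType K).
Variables (e : nat -> V) (A : V * V -> Prop).
Hypotheses (gA : good e A) (ind : independent e) (tot : forall v, in_frame e A v).

Lemma A00 : A (0, 0).
Proof.
by have [x [_ [_ [[y Axy] _]]]] := tot 0; exact: good_zero gA Axy.
Qed.

Lemma dom_lin a x x' : dom A x -> dom A x' -> dom A (a *: x + x').
Proof. by move=> [y h] [y' h']; exists (a *: y + y'); apply: (good_lin gA). Qed.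

Lemma ran_lin a y y' : ran A y -> ran A y' -> ran A (a *: y + y').
Proof. by move=> [x h] [x' h']; exists (a *: x + x'); apply: (good_lin gA). Qed.

Lemma dom0 : dom A 0. Proof. by exists 0; exact: A00. Qed.
Lemma ran0 : ran A 0. Proof. by exists 0; exact: A00. Qed.

Lemma domB x x' : dom A x -> dom A x' -> dom A (x - x').
Proof. by move=> h h'; rewrite addrC -scaleN1r; apply: dom_lin. Qed.

Lemma ranB y y' : ran A y -> ran A y' -> ran A (y - y').
Proof. by move=> h h'; rewrite addrC -scaleN1r; apply: ran_lin. Qed.

Lemma frame_unique d r c d' r' c' N N' : dom A d -> ran A r -> supported N c ->
  dom A d' -> ran A r' -> supported N' c' ->
  d + r + esum e N c = d' + r' + esum e N' c' -> [/\ d = d', r = r' & c = c'].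
Proof.
move=> hd hr hc hd' hr' hc' eq.
rewrite -(esum_widen e hc (leq_maxl N N')) -(esum_widen e hc' (leq_maxr N N')) in eq.
set M := maxn N N' in eq.
have ediff := sub_add3 eq.
have ecomb : esum e M c' - esum e M c = esum e M (fun i => (-1) * c i + c' i).
  by rewrite esum_lin scaleN1r addrC.
rewrite ecomb in ediff.
have [dd rr] := good_direct gA (domB hd hd') (ranB hr hr') (ex_intro _ M (ex_intro _ _ ediff)).
move: ediff; rewrite dd rr addr0 => /esym/ind ediff.
split; [by apply/eqP; rewrite -subr_eq0 dd | by apply/eqP; rewrite -subr_eq0 rr |].
apply: functional_extensionality => i; case: (ltnP i M) => iM.
  by move/eqP: (ediff i iM); rewrite mulN1r addrC subr_eq0 => /eqP.
by rewrite hc ?hc' //; apply: leq_trans iM; [exact: leq_maxr | exact: leq_maxl].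
Qed.

(* The coordinates (d, r, c) of v in the frame, chosen once and for all;
   by uniqueness they agree with any decomposition, hence are linear. *)
Definition decP (v : V) (t : V * V * (nat -> K)) : Prop :=
  [/\ dom A t.1.1, ran A t.1.2, finsupp t.2 & v = t.1.1 + t.1.2 + fsum e t.2].
Definition decomp (v : V) := epsilon (inhabits (0, 0, fun _ => 0)) (decP v).
Definition dpart (v : V) : V := (decomp v).1.1.
Definition rpart (v : V) : V := (decomp v).1.2.
Definition coord (v : V) : nat -> K := (decomp v).2.

Lemma decomp_spec v :
  [/\ dom A (dpart v), ran A (rpart v), finsupp (coord v)
    & v = dpart v + rpart v + fsum e (coord v)].
Proof.
apply: (epsilon_spec (inhabits (0, 0, fun _ => 0)) (decP v)).
have [x [y [w [hx [hy [[N [c ew]] ->]]]]]] := tot v.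
exists (x, y, restrict N c); split=> //=; first by exists N; exact: supported_restrict.
by rewrite (fsum_eq e (supported_restrict (N:=N) c)) esum_restrict // ew.
Qed.

Lemma decomp_eq v d r c N : dom A d -> ran A r -> supported N c ->
  v = d + r + fsum e c -> [/\ dpart v = d, rpart v = r & coord v = c].
Proof.
move=> hd hr hc hv; have [hd' hr' [N' hc'] ev] := decomp_spec v.
rewrite (fsum_eq e hc) in hv; rewrite (fsum_eq e hc') in ev.
exact: frame_unique hd' hr' hc' hd hr hc (etrans (esym ev) hv).
Qed.

Lemma decomp_lin a u v :
  [/\ dpart (a *: u + v) = a *: dpart u + dpart v,
      rpart (a *: u + v) = a *: rpart u + rpart v &
      coord (a *: u + v) = fun i => a * coord u i + coord v i].
Proof.
have [du ru [Nu cu] eu] := decomp_spec u; have [dv rv [Nv cv] ev] := decomp_spec v.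
have s1 := supported_maxl (M:=Nv) cu; have s2 := supported_maxr (N:=Nu) cv.
apply: (decomp_eq (N := maxn Nu Nv)); [exact: dom_lin | exact: ran_lin |
  exact: supported_lin |].
by rewrite (fsum_lin e a s1 s2) {1}eu {1}ev scale_add3.
Qed.

Lemma coord_supported u v : exists N, supported N (coord u) /\ supported N (coord v).
Proof.
have [_ _ [Nu su] _] := decomp_spec u; have [_ _ [Nv sv] _] := decomp_spec v.
by exists (maxn Nu Nv); split; [exact: supported_maxl | exact: supported_maxr].
Qed.

Definition fwd (x : V) : V := epsilon (inhabits 0) (fun y => A (x, y)).
Definition bwd (y : V) : V := epsilon (inhabits 0) (fun x => A (x, y)).

Lemma A_fwd x : dom A x -> A (x, fwd x).
Proof. exact: (epsilon_spec (inhabits 0) (fun y => A (x, y))). Qed.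

Lemma A_bwd y : ran A y -> A (bwd y, y).
Proof. exact: (epsilon_spec (inhabits 0) (fun x => A (x, y))). Qed.

Lemma fwd_eq x y : A (x, y) -> fwd x = y.
Proof.
move=> h; have := good_lin gA (-1) h (A_fwd (ex_intro _ y h)).
by rewrite !scaleN1r addNr => /(good_fun gA) /eqP; rewrite addrC subr_eq0 => /eqP.
Qed.

Lemma bwd_eq x y : A (x, y) -> bwd y = x.
Proof.
move=> h; have := good_lin gA (-1) h (A_bwd (ex_intro _ x h)).
by rewrite !scaleN1r addNr => /(good_inj gA) /eqP; rewrite addrC subr_eq0 => /eqP.
Qed.

Lemma ran_fwd x : dom A x -> ran A (fwd x).
Proof. by move=> h; exists x; exact: A_fwd. Qed.

Lemma dom_bwd y : ran A y -> dom A (bwd y).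
Proof. by move=> h; exists y; exact: A_bwd. Qed.

Lemma fwd_lin a x x' : dom A x -> dom A x' -> fwd (a *: x + x') = a *: fwd x + fwd x'.
Proof. by move=> h h'; apply: fwd_eq; apply: (good_lin gA); apply: A_fwd. Qed.

Lemma bwd_lin a y y' : ran A y -> ran A y' -> bwd (a *: y + y') = a *: bwd y + bwd y'.
Proof. by move=> h h'; apply: bwd_eq; apply: (good_lin gA); apply: A_bwd. Qed.

Lemma bwd0 : bwd 0 = 0. Proof. exact/bwd_eq/A00. Qed.

Lemma bwd_fwd x : dom A x -> bwd (fwd x) = x.
Proof. by move=> h; apply: bwd_eq; exact: A_fwd. Qed.

Lemma fwd_bwd y : ran A y -> fwd (bwd y) = y.
Proof. by move=> h; apply: fwd_eq; exact: A_bwd. Qed.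

Definition even_coef (c : nat -> K) (i : nat) : K := if odd i then 0 else c i.
Definition swap_coef (c : nat -> K) (i : nat) : K := if odd i then c i.-1 else c i.+1.

Lemma supported_even N c : supported N c -> supported N (even_coef c).
Proof. by move=> s i h; rewrite /even_coef s // if_same. Qed.

Lemma supported_swap N c : supported N c -> supported N.+1 (swap_coef c).
Proof.
move=> s [|i] //; rewrite ltnS => h; rewrite /swap_coef /=.
by case: (odd i) => /=; apply: s => //; do 2!apply: leqW.
Qed.

Lemma even_coef_lin a c1 c2 :
  even_coef (fun i => a * c1 i + c2 i) = fun i => a * even_coef c1 i + even_coef c2 i.
Proof.
apply: functional_extensionality => i; rewrite /even_coef.
by case: odd; rewrite ?mulr0 ?addr0.
Qed.

Lemma swap_coef_lin a c1 c2 :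
  swap_coef (fun i => a * c1 i + c2 i) = fun i => a * swap_coef c1 i + swap_coef c2 i.
Proof. by apply: functional_extensionality => i; rewrite /swap_coef; case: odd. Qed.

Lemma even_coefK c : even_coef (even_coef c) = even_coef c.
Proof. by apply: functional_extensionality => i; rewrite /even_coef; case: odd. Qed.

Lemma swap_coefK c : swap_coef (swap_coef c) = c.
Proof. by apply: functional_extensionality => -[|i] //; rewrite /swap_coef /=; case: odd. Qed.

Lemma even_swap_coef c :
  even_coef (swap_coef c) = fun i => (-1) * swap_coef (even_coef c) i + swap_coef c i.
Proof.
apply: functional_extensionality => -[|i]; rewrite /even_coef /swap_coef /=.
  by rewrite mulr0 add0r.
by case: (odd i) => /=; rewrite ?mulr0 ?add0r ?mulN1r ?addNr.
Qed.

Definition proj (v : V) : V := dpart v + fsum e (even_coef (coord v)).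
Definition swapF (v : V) : V :=
  bwd (rpart v) + fwd (dpart v) + fsum e (swap_coef (coord v)).
Definition form (v : V) : K := coord v 0%N - coord v 1%N.

Lemma proj_lin : linmap proj.
Proof.
move=> a u v; rewrite /proj; have [-> _ ->] := decomp_lin a u v.
have [N [su sv]] := coord_supported u v.
rewrite even_coef_lin (fsum_lin e a (supported_even su) (supported_even sv)).
by rewrite scalerDr addrACA.
Qed.

Lemma swapF_lin : linmap swapF.
Proof.
move=> a u v; rewrite /swapF; have [-> -> ->] := decomp_lin a u v.
have [N [su sv]] := coord_supported u v.
have [du ru _ _] := decomp_spec u; have [dv rv _ _] := decomp_spec v.
rewrite swap_coef_lin (fsum_lin e a (supported_swap su) (supported_swap sv)).
by rewrite bwd_lin // fwd_lin // scale_add3.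
Qed.

Lemma form_lin a u v : form (a *: u + v) = a * form u + form v.
Proof.
rewrite /form; have [_ _ ->] := decomp_lin a u v.
by rewrite mulrBr opprD addrACA.
Qed.

Lemma proj_decomp v :
  [/\ dpart (proj v) = dpart v, rpart (proj v) = 0 & coord (proj v) = even_coef (coord v)].
Proof.
have [d _ [N s] _] := decomp_spec v.
apply: (decomp_eq (N := N)) => //; [exact: ran0 | exact: supported_even |].
by rewrite /proj addr0.
Qed.

Lemma swapF_decomp v :
  [/\ dpart (swapF v) = bwd (rpart v), rpart (swapF v) = fwd (dpart v)
    & coord (swapF v) = swap_coef (coord v)].
Proof.
have [d r [N s] _] := decomp_spec v.
apply: (decomp_eq (N := N.+1)) => //.
- exact: dom_bwd.
- exact: ran_fwd.
- exact: supported_swap.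
Qed.

Lemma projK v : proj (proj v) = proj v.
Proof. by have [h1 _ h3] := proj_decomp v; rewrite {1}/proj h1 h3 even_coefK. Qed.

Lemma swapFK : involutive swapF.
Proof.
move=> v; have [h1 h2 h3] := swapF_decomp v; have [d r _ ev] := decomp_spec v.
by rewrite {1}/swapF h1 h2 h3 swap_coefK bwd_fwd // fwd_bwd // -ev.
Qed.

Lemma proj_swapF v : proj (swapF v) = swapF v - swapF (proj v).
Proof.
have [h1 h2 h3] := swapF_decomp v; have [k1 k2 k3] := proj_decomp v.
have [N [s _]] := coord_supported v v.
rewrite {1}/proj h1 h3 {2}/swapF k1 k2 k3 bwd0 add0r even_swap_coef.
rewrite (fsum_lin e (-1) (supported_swap (supported_even s)) (supported_swap s)).
rewrite scaleN1r /swapF [bwd _ + fwd _ + _]addrAC addrKA.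
by rewrite -addrA [- _ + _]addrC.
Qed.

Definition delta0 (i : nat) : K := if i == 0%N then 1 else 0.

Lemma fsum_delta0 : fsum e delta0 = e 0%N.
Proof.
rewrite (fsum_eq e (N := 1%N)); last by move=> [|i].
by rewrite /esum big_ord1 /delta0 /= scale1r.
Qed.

Lemma e0_decomp : [/\ dpart (e 0%N) = 0, rpart (e 0%N) = 0 & coord (e 0%N) = delta0].
Proof.
apply: (decomp_eq (N := 1%N)); [exact: dom0 | exact: ran0 | by move=> [|i] |].
by rewrite fsum_delta0 !add0r.
Qed.

Lemma proj_e0 : proj (e 0%N) = e 0%N.
Proof.
rewrite /proj; have [-> _ ->] := e0_decomp.
have -> : even_coef delta0 = delta0.
  by apply: functional_extensionality => -[|i]; rewrite /even_coef /delta0 //=; case: odd.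
by rewrite add0r fsum_delta0.
Qed.

Lemma form_e0 : form (e 0%N) = 1.
Proof. by rewrite /form; have [_ _ ->] := e0_decomp; rewrite /delta0 /= subr0. Qed.

Lemma form_swapF_e0 : form (swapF (e 0%N)) = -1.
Proof.
rewrite /form; have [_ _ ->] := swapF_decomp (e 0%N); have [_ _ ->] := e0_decomp.
by rewrite /swap_coef /delta0 /= sub0r.
Qed.

Theorem frame_counterexample (hinf : infinite_dim V) : exists phi : Gr V -> Gr V,
    bijective phi /\
    (forall X Y : Gr V, adjacent X Y <-> adjacent (phi X) (phi Y)) /\
    exists P Q : Gr V, distant P Q /\ ~ distant (phi P) (phi Q).
Proof.
exact: (swap_frame_counterexample proj_lin swapF_lin form_lin projK swapFK
  proj_swapF proj_e0 form_e0 form_swapF_e0 hinf).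
Qed.

End FromFrame.

(* In an infinite-dimensional space over a division ring there is an
   independent sequence: choose each vector outside the span of the
   previous ones. *)
Section IndependentSequence.
Variables (K : unitRingType) (V : lmodType K).
Hypotheses (hK : forall x : K, x != 0 -> x \is a GRing.unit)
  (hinf : infinite_dim V).

Definition avoid (s : seq V) : V := epsilon (inhabits 0) (fun w => ~ in_span s w).

Lemma avoid_spec s : ~ in_span s (avoid s).
Proof.
apply: (epsilon_spec (inhabits 0) (fun w => ~ in_span s w)).
by apply: not_all_ex_not => h; apply: hinf; exists s.
Qed.

Fixpoint avoid_prefix (n : nat) : seq V :=
  if n is n'.+1 then rcons (avoid_prefix n') (avoid (avoid_prefix n')) else [::].

Definition avoid_seq (n : nat) : V := avoid (avoid_prefix n).

Lemma size_avoid_prefix n : size (avoid_prefix n) = n.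
Proof. by elim: n => //= n IH; rewrite size_rcons IH. Qed.

Lemma nth_avoid_prefix n i : (i < n)%N -> (avoid_prefix n)`_i = avoid_seq i.
Proof.
elim: n => // n IH; rewrite ltnS leq_eqVlt => /orP [/eqP ->|lt] /=.
  by rewrite nth_rcons size_avoid_prefix ltnn eqxx.
by rewrite nth_rcons size_avoid_prefix lt IH.
Qed.

Lemma avoid_seq_new n c : avoid_seq n <> esum avoid_seq n c.
Proof.
move=> h; apply: (@avoid_spec (avoid_prefix n)); exists c.
rewrite -/(avoid_seq n) h /esum size_avoid_prefix.
by apply: eq_bigr => i _; rewrite nth_avoid_prefix.
Qed.

Lemma exists_independent : exists e : nat -> V, independent e.
Proof.
exists avoid_seq; elim=> [c _ i //|N IH c]; rewrite /esum big_ord_recr /= => h.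
have cN : c N = 0.
  apply/eqP; apply: contraT => cN0; exfalso.
  apply: (@avoid_seq_new N (fun i => - (c N)^-1 * c i)).
  move/eqP: h; rewrite addrC addr_eq0 => /eqP h'.
  rewrite (scale_inv (hK cN0) h') /esum scalerN scaler_sumr.
  by rewrite -sumrN; apply: eq_bigr => i _; rewrite scalerA mulNr scaleNr.
move: h; rewrite cN scale0r addr0 => h i; rewrite ltnS leq_eqVlt => /orP [/eqP ->//|].
exact: IH h i.
Qed.

End IndependentSequence.

(* Good relations are closed under unions of chains, so Zorn's lemma gives a
   maximal one. *)
Lemma exists_maximal_good (K : unitRingType) (V : lmodType K) (e : nat -> V) :
  exists A, good e A /\
  forall B, good e B -> (forall t, A t -> B t) -> forall t, B t -> A t.
Proof.
have [A [gA maxA]] : exists A, good e A /\ forall B, (A `<` B)%classic -> ~ good e B.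
  apply: Zorn_bigcup => F FG Ftot.
  have common t1 t2 : (\bigcup_(X in F) X)%classic t1 -> (\bigcup_(X in F) X)%classic t2 ->
      exists2 X, F X & X t1 /\ X t2.
    move=> [X FX X1] [Y FY Y2].
    by case: (Ftot X Y FX FY) => XY; [exists Y => //; split=> //; exact: XY |
      exists X => //; split=> //; exact: XY].
  split.
  - move=> a x y x' y' h1 h2; have [X FX [X1 X2]] := common _ _ h1 h2.
    by exists X => //; exact: (good_lin (FG X FX)).
  - by move=> y [X FX X0]; exact: (good_fun (FG X FX)).
  - by move=> x [X FX X0]; exact: (good_inj (FG X FX)).
  - move=> x y [y1 h1] [x2 h2]; have [X FX [X1 X2]] := common _ _ h1 h2.
    by apply: (good_direct (FG X FX)); [exists y1 | exists x2].
exists A; split=> // B gB AB t Bt; apply: NNPP => nAt.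
by apply: (maxA B) => //; split=> // BA; exact/nAt/BA.
Qed.

(* For a maximal good relation A, the frame subspace dom A + ran A + <e> has
   codimension at most one: if v is outside it and u is outside it + Kv,
   then A could be enlarged by the pair (v, u). *)
Section MaximalFrame.
Variables (K : unitRingType) (V : lmodType K) (e : nat -> V) (A : V * V -> Prop).
Hypotheses (hK : forall x : K, x != 0 -> x \is a GRing.unit) (gA : good e A)
  (maxA : forall B, good e B -> (forall t, A t -> B t) -> forall t, B t -> A t).

(* Even an empty A would not be maximal, since {(0, 0)} is good. *)
Lemma maximal_A00 : A (0, 0).
Proof.
have [[t At]|noA] := classic (exists t, A t); first exact: good_zero gA At.
apply: (maxA (B := fun t => t = (0, 0))) => // [|t At]; last by case: noA; exists t.
split; first by move=> a x y x' y' [-> ->] [-> ->]; rewrite scaler0 addr0.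
- by move=> y [].
- by move=> x [].
- by move=> x y [y0 [-> _]] [x0 [_ ->]].
Qed.

Let frame := in_frame e A.

Lemma frame_lin a z z' : frame z -> frame z' -> frame (a *: z + z').
Proof.
move=> [x [y [w [[x1 h1] [[y1 h2] [h3 ->]]]]]] [x' [y' [w' [[x1' k1] [[y1' k2] [k3 ->]]]]]].
exists (a *: x + x'), (a *: y + y'), (a *: w + w'); rewrite scale_add3.
split; first by exists (a *: x1 + x1'); apply: (good_lin gA).
split; first by exists (a *: y1 + y1'); apply: (good_lin gA).
by split=> //; exact: in_espan_lin.
Qed.

Lemma frame0 : frame 0.
Proof.
exists 0, 0, 0; split; first by exists 0; exact: maximal_A00.
split; first by exists 0; exact: maximal_A00.
by split; [exact: in_espan0 | rewrite !addr0].
Qed.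

Lemma frame_dom x : dom A x -> frame x.
Proof.
move=> h; exists x, 0, 0; split=> //; split; first by exists 0; exact: maximal_A00.
by split; [exact: in_espan0 | rewrite !addr0].
Qed.

Lemma frame_ran y : ran A y -> frame y.
Proof.
move=> h; exists 0, y, 0; split; first by exists 0; exact: maximal_A00.
by split=> //; split; [exact: in_espan0 | rewrite add0r addr0].
Qed.

Lemma frame_espan w : in_espan e w -> frame w.
Proof.
move=> h; exists 0, 0, w; split; first by exists 0; exact: maximal_A00.
split; first by exists 0; exact: maximal_A00.
by rewrite !add0r.
Qed.

Lemma frame_scale a z : frame z -> frame (a *: z).
Proof. by move=> h; rewrite -[a *: z]addr0; apply: frame_lin => //; exact: frame0. Qed.

Lemma frame_add z z' : frame z -> frame z' -> frame (z + z').
Proof. by move=> h h'; rewrite -[z]scale1r; apply: frame_lin. Qed.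

Lemma frame_sub z z' : frame z -> frame z' -> frame (z - z').
Proof. by move=> h h'; rewrite addrC -scaleN1r; apply: frame_lin. Qed.

Section Enlarge.
Variables (v u : V).
Hypotheses (nv : ~ frame v) (nu : ~ exists k z, frame z /\ u = z + k *: v).

Definition enlarged (t : V * V) : Prop :=
  exists x y a, A (x, y) /\ t = (x + a *: v, y + a *: u).

Lemma frame_coef_v a z : frame z -> z = a *: v -> a = 0.
Proof.
move=> hz hza; apply/eqP; apply: contraT => a0; exfalso; apply: nv.
by rewrite (scale_inv (hK a0) (esym hza)); exact: frame_scale.
Qed.

Lemma frame_coef_u b a z : frame z -> z = b *: u + a *: v -> b = 0.
Proof.
move=> hz hza; apply/eqP; apply: contraT => b0; exfalso; apply: nu.
have e1 : b *: u = z - a *: v by rewrite hza addrK.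
exists (- (b^-1 * a)), (b^-1 *: z); split; first exact: frame_scale.
by rewrite (scale_inv (hK b0) e1) scalerBr scalerA scaleNr.
Qed.

Lemma dom_enlarged x : dom enlarged x -> exists x1 a, dom A x1 /\ x = x1 + a *: v.
Proof. by move=> [_ [x1 [y1 [a [h [-> _]]]]]]; exists x1, a; split=> //; exists y1. Qed.

Lemma ran_enlarged y : ran enlarged y -> exists y1 a, ran A y1 /\ y = y1 + a *: u.
Proof. by move=> [_ [x1 [y1 [a [h [_ ->]]]]]]; exists y1, a; split=> //; exists x1. Qed.

Lemma good_enlarged : good e enlarged.
Proof.
split.
- move=> b x1 y1 x2 y2 [u1 [w1 [a1 [h1 [-> ->]]]]] [u2 [w2 [a2 [h2 [-> ->]]]]].
  exists (b *: u1 + u2), (b *: w1 + w2), (b * a1 + a2).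
  split; first exact: (good_lin gA).
  by congr (_, _); rewrite !scalerDr !scalerDl !scalerA addrACA.
- move=> y [x1 [y1 [a [h1 []]]]] e1 ->.
  have a0 : a = 0.
    apply: (frame_coef_v (z := 0 - x1)).
      by apply: frame_sub; [exact: frame0 | apply: frame_dom; exists y1].
    by rewrite sub0r -[a *: v](addKr x1) -e1 addr0.
  by move: e1 h1; rewrite a0 !scale0r !addr0 => <- h1; exact: (good_fun gA).
- move=> x [x1 [y1 [a [h1 []]]]] -> e1.
  have a0 : a = 0.
    apply: (frame_coef_u (a := 0) (z := 0 - y1)).
      by apply: frame_sub; [exact: frame0 | apply: frame_ran; exists x1].
    by rewrite sub0r scale0r addr0 -[a *: u](addKr y1) -e1 addr0.
  by move: e1 h1; rewrite a0 !scale0r !addr0 => <- h1; exact: (good_inj gA).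
move=> x y /dom_enlarged [x1 [a [h1 ->]]] /ran_enlarged [y2 [b [h2 ->]]] sp.
have hz : frame (x1 + a *: v + (y2 + b *: u) - x1 - y2).
  by apply: frame_sub; [apply: frame_sub; [exact: frame_espan | exact: frame_dom] |
    exact: frame_ran].
have b0 : b = 0.
  apply: (frame_coef_u hz).
  by rewrite addrAC [y2 + _]addrC addrA addrK addrAC [x1 + _]addrC addrK addrC.
rewrite b0 scale0r addr0 in sp hz *.
have a0 : a = 0 by apply: (frame_coef_v hz); rewrite addrAC [x1 + _]addrC addrK addrK.
rewrite a0 scale0r addr0 in sp *.
exact: (good_direct gA h1 h2 sp).
Qed.

End Enlarge.

Lemma frame_codim1 v u : frame v \/ exists k z, frame z /\ u = z + k *: v.
Proof.
apply: NNPP => /not_or_and [nv nu]; apply: (nv); apply: frame_dom; exists u.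
apply: (maxA (good_enlarged nv nu)).
  by move=> [x y] h; exists x, y, 0; rewrite !scale0r !addr0.
by exists 0, 0, 1; rewrite !scale1r !add0r; split=> //; exact: maximal_A00.
Qed.

Hypothesis ind : independent e.

Definition econs (w : V) (n : nat) : V := if n is n'.+1 then e n' else w.

Lemma esum_econs w N c :
  esum (econs w) N.+1 c = c 0%N *: w + esum e N (fun i => c i.+1).
Proof.
by rewrite /esum big_ord_recl /=; congr (_ + _); apply: eq_bigr => i _; rewrite lift0.
Qed.

Lemma espan_econs w z : in_espan (econs w) z <->
  exists k w', in_espan e w' /\ z = k *: w + w'.
Proof.
split.
  move=> [[|N] [c ->]]; last by exists (c 0%N), (esum e N (fun i => c i.+1));
    rewrite esum_econs; split=> //; exists N, (fun i => c i.+1).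
  by exists 0, 0; rewrite scale0r addr0 /esum big_ord0; split=> //; exact: in_espan0.
move=> [k [_ [[N [c ->]] ->]]]; exists N.+1, (fun i => if i is i'.+1 then c i' else k).
by rewrite esum_econs.
Qed.

Section OutsideVector.
Variables (w : V).
Hypothesis nw : ~ in_frame e A w.

Lemma good_econs : good (econs w) A.
Proof.
split; [exact: (good_lin gA) | exact: (good_fun gA) | exact: (good_inj gA) |].
move=> x y hx hy /espan_econs [k [w' [hw' exy]]].
have k0 : k = 0.
  apply: (frame_coef_v nw (z := x + y - w')); last by rewrite exy addrK.
  by apply: frame_sub; [apply: frame_add; [exact: frame_dom | exact: frame_ran] |
    exact: frame_espan].
by apply: (good_direct gA) => //; rewrite exy k0 scale0r add0r.
Qed.

Lemma independent_econs : independent (econs w).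
Proof.
move=> [|N] c //; rewrite esum_econs => h.
have c0 : c 0%N = 0.
  apply: (frame_coef_v nw (z := 0 - esum e N (fun i => c i.+1))).
    by apply: frame_sub; [exact: frame0 | apply: frame_espan; exists N, (fun i => c i.+1)].
  by apply/eqP; rewrite sub0r eq_sym -addr_eq0 h.
move: h; rewrite c0 scale0r add0r => /ind h [|i] //.
by rewrite ltnS => /h.
Qed.

Lemma total_econs v : in_frame (econs w) A v.
Proof.
case: (frame_codim1 w v) => [//|[k [_ [[x [y [w' [hx [hy [hw' ->]]]]]] ->]]]].
exists x, y, (w' + k *: w); do 2!split=> //; split; last by rewrite addrA.
by apply/espan_econs; exists k, w'; rewrite addrC.
Qed.

End OutsideVector.

Lemma frame_completion : exists e' : nat -> V,
  [/\ good e' A, independent e' & forall v, in_frame e' A v].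
Proof.
have [tot|/not_all_ex_not [w nw]] := classic (forall v, in_frame e A v).
  by exists e.
exists (econs w); split; [exact: good_econs | exact: independent_econs |].
exact: total_econs.
Qed.

End MaximalFrame.

Theorem mainTheorem5 (K : unitRingType)
  (hK : forall x : K, x != 0 -> x \is a GRing.unit)
  (V : lmodType K) (hinf : infinite_dim V) :
  exists phi : Gr V -> Gr V,
    bijective phi /\
    (forall X Y : Gr V, adjacent X Y <-> adjacent (phi X) (phi Y)) /\
    exists P Q : Gr V, distant P Q /\ ~ distant (phi P) (phi Q).
Proof.
have [e ind] := exists_independent hK hinf.
have [A [gA maxA]] := exists_maximal_good e.
have [e' [gA' ind' tot]] := frame_completion hK gA maxA ind.
exact: frame_counterexample gA' ind' tot hinf.
Qed.
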